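(* Let $n\ge2$, $t\in(0,1)$ and $A\in\mathcal K_0^n$, and set $\kappa_t(A)=\overline{\mathrm{conv}}\Big(\bigcup_{a\in A}\big[0,\tfrac{1}{1+t\|a\|}a\big]\cup t\mathbb B\Big)$. Then $\kappa_t(A)\subseteq \big(\psi_t(A^\circ)\big)^\circ$, where $\psi_t(K)=(K+t\mathbb B)\cap\frac{1-t}{t}\mathbb B$.
   Context: $\mathbb B$ is the closed Euclidean unit ball of $\mathbb R^n$, $[a,b]$ the segment between $a,b$, and $\overline{\mathrm{conv}}$ the closed convex hull. $\mathcal K_0^n$ is the family of closed convex subsets of $\mathbb R^n$ containing $0$. The polar set of $A\subseteq\mathbb R^n$ is $A^\circ=\{x\in\mathbb R^n:\sup_{a\in A}\langle a,x\rangle\le1\}$. *)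

From HB Require Import structures.
From mathcomp Require Import all_boot all_order all_algebra.
From mathcomp Require Import boolp classical_sets reals.
Set Implicit Arguments. Unset Strict Implicit. Unset Printing Implicit Defensive.
Import Order.TTheory GRing.Theory Num.Theory.
Local Open Scope ring_scope.
Local Open Scope classical_set_scope.

Section Defs.
Variables (R : realType) (n : nat).
Notation vec := 'rV[R]_n.

Definition dotp (u v : vec) : R := \sum_(i < n) u 0 i * v 0 i.
Definition enorm (u : vec) : R := Num.sqrt (dotp u u).

Definition eball (r : R) : set vec := [set x | enorm x <= r].

Definition eclosure (S : set vec) : set vec :=
  [set x | forall e : R, 0 < e -> exists2 y, S y & enorm (x - y) < e].
Definition eclosed (S : set vec) : Prop := eclosure S `<=` S.

Definition conv (S : set vec) : set vec :=
  [set x | exists (m : nat) (w : 'I_m -> R) (p : 'I_m -> vec),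
     [/\ forall i, 0 <= w i, \sum_(i < m) w i = 1,
         forall i, S (p i) & x = \sum_(i < m) w i *: p i]].

Definition cl_conv (S : set vec) : set vec := eclosure (conv S).

Definition convex_set (S : set vec) : Prop :=
  forall x y (s : R), S x -> S y -> 0 <= s <= 1 -> S (s *: x + (1 - s) *: y).

Definition K0 (A : set vec) : Prop := [/\ eclosed A, convex_set A & A 0].

Definition polar (A : set vec) : set vec :=
  [set x | forall a, A a -> dotp a x <= 1].

Definition seg0 (b : vec) : set vec := [set s *: b | s in [set s : R | 0 <= s <= 1]].

Definition msum (S T : set vec) : set vec := [set x + y | x in S & y in T].

Definition kappa (t : R) (A : set vec) : set vec :=
  cl_conv ((\bigcup_(a in A) seg0 ((1 + t * enorm a)^-1 *: a)) `|` eball t).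

Definition psi (t : R) (K : set vec) : set vec :=
  msum K (eball t) `&` eball ((1 - t) / t).

End Defs.

From HB Require Import structures.
From mathcomp Require Import all_boot all_order all_algebra.
From mathcomp Require Import boolp classical_sets reals.
From mathcomp Require Import ring lra.
Import Order.TTheory GRing.Theory Num.Theory.
Local Open Scope ring_scope.
Local Open Scope classical_set_scope.

(* Every polar is closed and convex, so [polar (psi t (polar A))] contains
   [kappa t A] as soon as it contains its generators.  Write [y = k + b] with
   [k] in the polar of [A], [|b| <= t] and [|y| <= (1 - t) / t].  For [a] in [A],
   [<a, y> <= 1 + <a, b> <= 1 + t |a|], so the whole segment
   [[0, a / (1 + t |a|)]] lies in the halfspace [<., y> <= 1]; for [|z| <= t],
   [<z, y> <= t (1 - t) / t = 1 - t <= 1]. *)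

Set Implicit Arguments. Unset Strict Implicit.

Section InnerProduct.
Variables (R : realType) (n : nat).
Notation vec := 'rV[R]_n.

Lemma dotpC (u v : vec) : dotp u v = dotp v u.
Proof. by apply: eq_bigr => i _; rewrite mulrC. Qed.

Lemma dotpDr (u v w : vec) : dotp u (v + w) = dotp u v + dotp u w.
Proof. by rewrite /dotp -big_split; apply: eq_bigr => i _; rewrite mxE mulrDr. Qed.

Lemma dotpZr (u v : vec) a : dotp u (a *: v) = a * dotp u v.
Proof. by rewrite /dotp mulr_sumr; apply: eq_bigr => i _; rewrite mxE mulrCA. Qed.

Lemma dotpNr (u v : vec) : dotp u (- v) = - dotp u v.
Proof. by rewrite -scaleN1r dotpZr mulN1r. Qed.

Lemma dotp0r (u : vec) : dotp u 0 = 0.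
Proof. by rewrite /dotp big1 // => i _; rewrite mxE mulr0. Qed.

Lemma dotp_sumr m (u : vec) (F : 'I_m -> vec) :
  dotp u (\sum_(i < m) F i) = \sum_(i < m) dotp u (F i).
Proof.
elim/big_ind2: _ => [|x1 x2 y1 y2 <- <-|//]; first exact: dotp0r.
exact: dotpDr.
Qed.

Lemma dotpDl (u v w : vec) : dotp (v + w) u = dotp v u + dotp w u.
Proof. by rewrite dotpC dotpDr !(dotpC u). Qed.

Lemma dotpZl (u v : vec) a : dotp (a *: v) u = a * dotp v u.
Proof. by rewrite dotpC dotpZr dotpC. Qed.

Lemma dotpNl (u v : vec) : dotp (- v) u = - dotp v u.
Proof. by rewrite dotpC dotpNr dotpC. Qed.

Lemma dotp_suml m (u : vec) (F : 'I_m -> vec) :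
  dotp (\sum_(i < m) F i) u = \sum_(i < m) dotp (F i) u.
Proof. by rewrite dotpC dotp_sumr; apply: eq_bigr => i _; rewrite dotpC. Qed.

Lemma dotpp_ge0 (u : vec) : 0 <= dotp u u.
Proof. by apply: sumr_ge0 => i _; rewrite -expr2 sqr_ge0. Qed.

Lemma enorm_ge0 (u : vec) : 0 <= enorm u.
Proof. exact: sqrtr_ge0. Qed.

Lemma enorm_sqr (u : vec) : enorm u ^+ 2 = dotp u u.
Proof. by rewrite sqr_sqrtr // dotpp_ge0. Qed.

Lemma enorm_eq0_dotp (u v : vec) : enorm u = 0 -> dotp u v = 0.
Proof.
move=> u0; have uu0 : dotp u u = 0 by rewrite -enorm_sqr u0 expr0n.
have sqr_ge0i i : 0 <= u 0 i * u 0 i by rewrite -expr2 sqr_ge0.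
have ui0 i : u 0 i = 0.
  have /eqP := psumr_eq0P (fun i _ => sqr_ge0i i) uu0 (i:=i) isT.
  by rewrite mulf_eq0 orbb => /eqP.
by rewrite /dotp big1 // => i _; rewrite ui0 mul0r.
Qed.

Lemma dotp_le_enorm (u v : vec) : dotp u v <= enorm u * enorm v.
Proof.
have [u0|nz_u] := eqVneq (enorm u) 0; first by rewrite enorm_eq0_dotp // u0 mul0r.
have [v0|nz_v] := eqVneq (enorm v) 0; first by rewrite dotpC enorm_eq0_dotp // v0 mulr0.
have a_gt0 : 0 < enorm u by rewrite lt_neqAle eq_sym nz_u enorm_ge0.
have b_gt0 : 0 < enorm v by rewrite lt_neqAle eq_sym nz_v enorm_ge0.
set a := enorm u in a_gt0 *; set b := enorm v in b_gt0 *.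
(* [0 <= |b u - a v|^2 = 2 a b (a b - <u, v>)] *)
have := dotpp_ge0 (b *: u - a *: v).
have -> : dotp (b *: u - a *: v) (b *: u - a *: v) =
    b ^+ 2 * dotp u u - 2 * a * b * dotp u v + a ^+ 2 * dotp v v.
  by rewrite !dotpDl !dotpDr !dotpNl !dotpNr !dotpZl !dotpZr [dotp v u]dotpC; ring.
rewrite -!enorm_sqr -/a -/b => sq_ge0.
have ab_gt0 : 0 < a * b by rewrite mulr_gt0.
nra.
Qed.

End InnerProduct.

Section Polar.
Variables (R : realType) (n : nat).
Notation vec := 'rV[R]_n.
Implicit Types (S : set vec) (y : vec).

Lemma polar_conv S : polar S `<=` polar (conv S).
Proof.
move=> y Sy _ [m [w [p [w_ge0 w_sum1 Sp ->]]]].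
rewrite dotp_suml -w_sum1; apply: ler_sum => i _.
by rewrite dotpZl -[leRHS]mulr1 ler_wpM2l // Sy.
Qed.

Lemma polar_eclosure S : polar S `<=` polar (eclosure S).
Proof.
move=> y Sy x Sx; rewrite leNgt; apply/negP => xy_gt1.
set d := dotp x y - 1; have d_gt0 : 0 < d by rewrite subr_gt0.
have y_ge0 := enorm_ge0 y.
have e_gt0 : 0 < d / (enorm y + 1) by rewrite divr_gt0 // ltr_wpDl.
have [z Sz xz_lt] := Sx _ e_gt0.
have zy_le1 := Sy z Sz.
have xzy_le := dotp_le_enorm (x - z) y.
have xy_split : dotp x y = dotp z y + dotp (x - z) y.
  by rewrite dotpDl dotpNl addrCA subrr addr0.
have : enorm (x - z) * enorm y <= d / (enorm y + 1) * enorm y.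
  by rewrite ler_wpM2r // ltW.
have : d / (enorm y + 1) * enorm y < d by rewrite mulrAC ltr_pdivrMr ?ltr_wpDl //; nra.
rewrite /d in d_gt0 *; lra.
Qed.

Lemma polar_cl_conv S : polar S `<=` polar (cl_conv S).
Proof. by move=> y /polar_conv /polar_eclosure. Qed.

Lemma polar_setU S1 S2 y : polar S1 y -> polar S2 y -> polar (S1 `|` S2) y.
Proof. by move=> S1y S2y z [/S1y|/S2y]. Qed.

Lemma polar_seg0 b y : dotp b y <= 1 -> polar (seg0 b) y.
Proof.
move=> by_le1 _ [s /= /andP[s_ge0 s_le1] <-]; rewrite dotpZl.
nra.
Qed.

Lemma polar_eball r y : 0 <= r -> r * enorm y <= 1 -> polar (eball r) y.
Proof.
move=> r_ge0 ry_le1 z z_le; apply: le_trans (dotp_le_enorm z y) _.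
by apply: le_trans ry_le1; rewrite ler_wpM2r ?enorm_ge0.
Qed.

End Polar.

Section Kappa.
Variables (R : realType) (n : nat) (t : R).
Notation vec := 'rV[R]_n.
Hypothesis t_gt0 : 0 < t.

Lemma polar_seg0_shrunk (a y : vec) : dotp a y <= 1 + t * enorm a ->
  polar (seg0 ((1 + t * enorm a)^-1 *: a)) y.
Proof.
move=> ay_le; apply: polar_seg0; rewrite dotpZl mulrC ler_pdivrMr ?mul1r //.
by rewrite ltr_wpDr ?mulr_ge0 ?enorm_ge0 // ltW.
Qed.

Lemma dotp_add_ball_le (a k b : vec) : dotp a k <= 1 -> enorm b <= t ->
  dotp a (k + b) <= 1 + t * enorm a.
Proof.
move=> ak_le1 b_le; rewrite dotpDr lerD //.
by apply: le_trans (dotp_le_enorm a b) _; rewrite mulrC ler_wpM2r ?enorm_ge0.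
Qed.

Lemma psi_sub_polar_kappa_generators (A : set vec) :
  psi t (polar A) `<=`
  polar ((\bigcup_(a in A) seg0 ((1 + t * enorm a)^-1 *: a)) `|` eball t).
Proof.
move=> _ [[k Ak [b b_le <-]] y_le]; apply: polar_setU.
  move=> z [a Aa]; apply: polar_seg0_shrunk => //.
  exact: dotp_add_ball_le (Ak a Aa) b_le.
apply: polar_eball; first exact: ltW.
apply: le_trans (ler_wpM2l (ltW t_gt0) y_le) _.
by rewrite mulrCA divff ?mulr1 ?gt_eqF // gerBl ltW.
Qed.

End Kappa.

Theorem lemma4p2 (R : realType) (n : nat) (t : R) (A : set 'rV[R]_n) :
  (2 <= n)%N -> 0 < t < 1 -> K0 A ->
  kappa t A `<=` polar (psi t (polar A)).
Proof.
move=> _ /andP[t_gt0 _] _ x kx y /(psi_sub_polar_kappa_generators t_gt0) y_polar.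
by rewrite dotpC; apply: polar_cl_conv y_polar x kx.
Qed.
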